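(* Let $F$ be a diagonal free self-map of $\mathbb{T}^n$. Let $z\in\mathbb{R}^n$ and $r\in\mathbb{R}_{\ge0}$. If the Hilbert ball $B_H(z,r)$ is contained in $\mathcal{S}(F)$, then $r\le\mathbf{b}(F(z)-z)$.
   Context: $\mathbb{T}=\mathbb{R}\cup\{-\infty\}$, ordered entrywise on $\mathbb{T}^n$. A self-map $F$ of $\mathbb{T}^n$ is order-preserving if $x\le y\Rightarrow F(x)\le F(y)$, and additively homogeneous if $F(\lambda+x)=\lambda+F(x)$ for all $\lambda\in\mathbb{T}$, $x\in\mathbb{T}^n$. An order-preserving, additively homogeneous self-map $F$ of $\mathbb{T}^n$ is diagonal free if for every $i\in\{1,\dots,n\}$ and all $x,y\in\mathbb{R}^n$ with $x_j=y_j$ for all $j\ne i$, one has $F_i(x)=F_i(y)$. For a vector $x$, $\mathbf{t}(x)=\max_i x_i$, $\mathbf{b}(x)=\min_i x_i$; $\|x\|_H=\mathbf{t}(x)-\mathbf{b}(x)$ on $\mathbb{R}^n$, and $B_H(z,r)=\{x\in\mathbb{R}^n: \|x-z\|_H\le r\}$. $\mathcal{S}(F)=\{x\in\mathbb{T}^n: x\le F(x)\}$. *)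

(* The tropical semifield T = R ∪ {-oo} is modelled as
   [option R] with [None] standing for -oo, over an arbitrary real field R
   (the paper's R is an instance). *)
From HB Require Import structures.
From mathcomp Require Import all_boot all_order all_algebra.
Set Implicit Arguments. Unset Strict Implicit. Unset Printing Implicit Defensive.
Import Order.TTheory GRing.Theory Num.Theory.
Local Open Scope ring_scope.

Section Trop.
Variable R : realFieldType.

Definition trop := option R.

Definition Tle (a b : trop) : Prop :=
  match a, b with
  | None, _ => True
  | Some _, None => False
  | Some a, Some b => a <= b
  end.

(* addition on T (the tropical multiplication): -oo is absorbing *)
Definition Tadd (l a : trop) : trop :=
  match l, a with
  | Some l, Some a => Some (l + a)
  | _, _ => None
  end.

Definition Tmin (a b : trop) : trop :=
  match a, b with
  | Some a, Some b => Some (Num.min a b)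
  | _, _ => None
  end.

Variable n : nat.
Definition tvec := {ffun 'I_n -> trop}.
Definition rvec := {ffun 'I_n -> R}.

Definition vle (x y : tvec) : Prop := forall i, Tle (x i) (y i).

Definition vshift (l : trop) (x : tvec) : tvec := [ffun i => Tadd l (x i)].

Definition emb (x : rvec) : tvec := [ffun i => Some (x i)].

Definition order_preserving (F : tvec -> tvec) : Prop :=
  forall x y, vle x y -> vle (F x) (F y).

Definition add_homogeneous (F : tvec -> tvec) : Prop :=
  forall (l : trop) (x : tvec), F (vshift l x) = vshift l (F x).

Definition diagonal_free (F : tvec -> tvec) : Prop :=
  [/\ order_preserving F, add_homogeneous F &
      forall (i : 'I_n) (x y : rvec),
        (forall j, j != i -> x j = y j) -> F (emb x) i = F (emb y) i].

Definition superfix (F : tvec -> tvec) (x : tvec) : Prop := vle x (F x).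

(* t(x) = max_i x_i and b(x) = min_i x_i for real vectors (n >= 1;
   an arbitrary value 0 is returned when n = 0) *)
Definition rtop (x : rvec) : R :=
  match [pick i : 'I_n] with
  | Some i0 => \big[Num.max/x i0]_(i < n) x i
  | None => 0
  end.
Definition rbot (x : rvec) : R :=
  match [pick i : 'I_n] with
  | Some i0 => \big[Num.min/x i0]_(i < n) x i
  | None => 0
  end.

Definition tbot (x : tvec) : trop :=
  match [pick i : 'I_n] with
  | Some i0 => \big[Tmin/x i0]_(i < n) x i
  | None => Some 0
  end.

Definition hnorm (x : rvec) : R := rtop x - rbot x.
Definition hball (z : rvec) (r : R) (x : rvec) : Prop :=
  hnorm [ffun i => x i - z i] <= r.

Definition tsub_real (y : tvec) (z : rvec) : tvec := [ffun i => Tadd (Some (- z i)) (y i)].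

End Trop.

(* Raise the i-th coordinate of z by r: the resulting point x stays in the
   Hilbert ball B_H(z, r), so x <= F(x).  Since F is diagonal free, F_i(x) only
   depends on the coordinates of x other than the i-th, which are those of z;
   hence z_i + r <= F_i(z) for every i. *)
From HB Require Import structures.
From mathcomp Require Import all_boot all_order all_algebra.
Import Order.TTheory GRing.Theory Num.Theory.
Local Open Scope ring_scope.

Section HilbertBall.
Context {R : realFieldType} {n : nat}.

Lemma hnorm_le (x : rvec R n) (a b : R) :
  a <= b -> (forall j, a <= x j <= b) -> hnorm x <= b - a.
Proof.
move=> le_ab xab; rewrite /hnorm /rtop /rbot.
case: pickP => [i0 _|_]; last by rewrite subr0 subr_ge0.
have top_le : \big[Num.max/x i0]_(j < n) x j <= b.
  apply: (big_ind (fun v => v <= b)); first by case/andP: (xab i0).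
    by move=> u v hu hv; rewrite ge_max hu hv.
  by move=> j _; case/andP: (xab j).
have bot_ge : a <= \big[Num.min/x i0]_(j < n) x j.
  apply: (big_ind (fun v => a <= v)); first by case/andP: (xab i0).
    by move=> u v hu hv; rewrite le_min hu hv.
  by move=> j _; case/andP: (xab j).
exact: lerB.
Qed.

Definition bump (z : rvec R n) (i : 'I_n) (r : R) : rvec R n :=
  [ffun j => if j == i then z j + r else z j].

Lemma hball_bump (z : rvec R n) (i : 'I_n) (r : R) :
  0 <= r -> hball z r (bump z i r).
Proof.
move=> r_ge0; rewrite /hball -[X in _ <= X]subr0; apply: hnorm_le => // j.
rewrite !ffunE; case: (j == i); last by rewrite subrr lexx.
by rewrite addrAC subrr add0r lexx r_ge0.
Qed.

End HilbertBall.

Lemma Tle_Tmin {R : realFieldType} (a b c : trop R) :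
  Tle a b -> Tle a c -> Tle a (Tmin b c).
Proof. by case: a b c => [a|] [b|] [c|] //= hb hc; rewrite le_min hb hc. Qed.

Lemma tbot_ge {R : realFieldType} {n : nat} (x : tvec R n) (a : trop R) :
  (0 < n)%N -> (forall i, Tle a (x i)) -> Tle a (tbot x).
Proof.
case: n x => // m x _ xa; rewrite /tbot; case: pickP => [i0 _|/(_ ord0)//].
by apply: (big_ind (Tle a)) => [|u v|j _]; [exact: xa | exact: Tle_Tmin | exact: xa].
Qed.

Lemma diagonal_free_bump {R : realFieldType} {n : nat} {F : tvec R n -> tvec R n}
    {z : rvec R n} {i : 'I_n} {r : R} :
  diagonal_free F -> superfix F (emb (bump z i r)) ->
  Tle (Some (z i + r)) (F (emb z) i).
Proof.
case=> _ _ diagF /(_ i); rewrite [emb _ i]ffunE ffunE eqxx.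
by rewrite (diagF i (bump z i r) z) // => j /negbTE ji; rewrite ffunE ji.
Qed.

Theorem mainTheorem5 (R : realFieldType) (n : nat) (Hn : (0 < n)%N)
    (F : tvec R n -> tvec R n) (HF : diagonal_free F)
    (z : rvec R n) (r : R) (Hr : 0 <= r)
    (Hball : forall x : rvec R n, hball z r x -> superfix F (emb x)) :
  Tle (Some r) (tbot (tsub_real (F (emb z)) z)).
Proof.
apply: tbot_ge => // i.
have := diagonal_free_bump HF (Hball _ (hball_bump z i r Hr)).
rewrite ffunE; case: (F _ i) => [v|] //= zrv.
by rewrite addrC lerBrDr addrC.
Qed.
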